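(* Let $k$ be an algebraically closed field of characteristic zero, $A=k[x,y]$, $\mathfrak m=(x,y)$. Let $M$ be an $A$-module of length $n\geq 3$ supported at $\mathfrak m$ whose minimal number of generators $r_M=\dim_k M/\mathfrak m M$ equals $n-1$. Then $M\cong k^{n-3}\oplus N$, where $k=A/\mathfrak m$ and $N$ is an $A$-module of length $3$ (supported at $\mathfrak m$) with $r_N=2$. *)

From HB Require Import structures.
From mathcomp Require Import all_boot all_order all_algebra.
Set Implicit Arguments. Unset Strict Implicit. Unset Printing Implicit Defensive.
Import Order.TTheory GRing.Theory Num.Theory.
Local Open Scope ring_scope.

(* A module M over A = k[x,y] of finite length n supported at m = (x,y) is
   encoded (as usual) by the k-vector space k^n (row vectors) together with
   the actions of x and y, i.e. two matrices X, Y (v |-> v *m X, v |-> v *m Y)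
   which commute (A is commutative) and are nilpotent (M is supported at m,
   i.e. killed by a power of m).  Its length equals its k-dimension n. *)
Definition fin_mod_at_m (k : fieldType) (n : nat) (X Y : 'M[k]_n) : Prop :=
  X *m Y = Y *m X /\ (exists j : nat, X ^+ j = 0) /\ (exists j : nat, Y ^+ j = 0).

(* r_M = dim_k M / mM, where mM = xM + yM is the sum of the row spaces of X and Y. *)
Definition min_gens (k : fieldType) (n : nat) (X Y : 'M[k]_n) : nat :=
  (n - \rank (X + Y)%MS)%N.

(* Since r_M = n - 1, the space mM = xM + yM is a line, and the socle S
   (the common left kernel of X and Y) has codimension at most
   rank X + rank Y <= 2.  Hence some 3-dimensional subspace N contains both
   mM and a complement of S.  N is a submodule because mN <= mM <= N, any
   complement K of N inside S is a submodule killed by m, and M = K (+) N with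
   K ~ k^(n-3).  As M = N + S we get mN = mM, so r_N = 3 - 1 = 2. *)

From HB Require Import structures.
From mathcomp Require Import all_boot all_order all_algebra zify.
Set Implicit Arguments.
Unset Strict Implicit.
Unset Printing Implicit Defensive.
Import Order.TTheory GRing.Theory Num.Theory.
Local Open Scope ring_scope.

Section RowSpaces.
Variable k : fieldType.

Lemma exists_row_base m n r (V : 'M[k]_(m, n)) :
  \rank V = r -> exists2 B : 'M_(r, n), row_free B & (B == V)%MS.
Proof.
by move=> <-; exists (row_base V); [exact: row_base_free | exact/eqmxP/eq_row_base].
Qed.

Lemma exists_row_free_supmx n r (U : 'M[k]_n) :
  (\rank U <= r)%N -> (r <= n)%N ->
  exists2 N : 'M_(r, n), row_free N & (U <= N)%MS.
Proof.
move=> leUr lern; pose d := (r - \rank U)%N.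
pose D : 'M_n := pid_mx d *m row_base (U^C)%MS.
have rankD : \rank D = d.
  by rewrite mxrankMfree ?row_base_free // rank_pid_mx ?mxrank_compl; lia.
have capUD : (U :&: D)%MS = 0.
  apply/eqP; rewrite -submx0 -(capmx_compl U) capmxS //.
  by rewrite (submx_trans (submxMl _ _)) // eq_row_base.
have rankUD : \rank (U + D)%MS = r.
  by rewrite mxrank_disjoint_sum // rankD; lia.
have [N freeN eqN] := exists_row_base rankUD.
by exists N; rewrite // (eqmxP eqN) addsmxSl.
Qed.

Lemma exists_unit_col_mx_sub p r (S : 'M[k]_(p + r)) (N : 'M_(r, p + r)) :
  row_free N -> row_full (N + S)%MS ->
  exists2 K : 'M_(p, p + r), (K <= S)%MS & col_mx K N \in unitmx.
Proof.
move=> freeN fullNS; pose D := (S :\: N)%MS.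
have fullDN : row_full (D + N)%MS.
  rewrite -sub1mx (submx_trans _ (_ : N + S <= D + N)%MS) ?sub1mx //.
  by rewrite addsmx_sub addsmxSr -{1}(addsmx_diff_cap_eq S N) addsmxS ?capmxSr.
have rankD : \rank D = p.
  move: fullDN (freeN); rewrite /row_full /row_free.
  by rewrite mxrank_disjoint_sum ?capmx_diff // => /eqP ? /eqP; lia.
have [K _ eqK] := exists_row_base rankD.
exists K; first by rewrite (eqmxP eqK) diffmxSl.
by rewrite -row_full_unit -sub1mx -addsmxE (submx_trans _ (_ : D + N <= K + N)%MS)
  ?sub1mx // addsmxS // (eqmxP eqK).
Qed.

Lemma submx_mul_row_full_adds r s n (N : 'M[k]_(r, n)) (S : 'M_(s, n)) (A : 'M_n) :
  row_full (N + S)%MS -> S *m A = 0 -> (A <= N *m A)%MS.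
Proof.
move=> fullNS SA0; have sA : (A <= (N + S)%MS *m A)%MS.
  by rewrite -{1}[A]mul1mx submxMr ?sub1mx.
by apply: submx_trans sA _; rewrite addsmxMr SA0 addsmx_sub submx_refl sub0mx.
Qed.

End RowSpaces.

Section Conjugation.
Variables (k : fieldType) (r n : nat) (N : 'M[k]_(r, n)).

Lemma mul_conjmx A : stablemx N A -> conjmx N A *m N = N *m A.
Proof. exact: mulmxKpV. Qed.

Lemma mul_conjmx_expr A j : stablemx N A -> conjmx N A ^+ j *m N = N *m A ^+ j.
Proof.
move=> sNA; elim: j => [|j IHj]; first by rewrite !expr0 mul1mx mulmx1.
by rewrite !exprSr -!mulmxE -mulmxA mul_conjmx // mulmxA IHj mulmxA.
Qed.

Lemma conj_col_mx_block0 p (K : 'M_(p, n)) A :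
  K *m A = 0 -> stablemx N A ->
  col_mx K N *m A = block_mx 0 0 0 (conjmx N A) *m col_mx K N.
Proof.
by move=> KA0 sNA; rewrite mul_col_mx mul_block_col !mul0mx !add0r KA0 mul_conjmx.
Qed.

Hypothesis freeN : row_free N.

Lemma fin_mod_at_m_conjmx X Y : stablemx N X -> stablemx N Y ->
  fin_mod_at_m X Y -> fin_mod_at_m (conjmx N X) (conjmx N Y).
Proof.
move=> sNX sNY [XY [[i Xi0] [j Yj0]]]; split; last split.
- apply: (row_free_inj freeN).
  by rewrite -2!(mulmxA _ _ N) !mul_conjmx // !mulmxA !mul_conjmx // -!mulmxA XY.
- exists i; apply: (row_free_inj freeN).
  by rewrite mul_conjmx_expr // Xi0 mulmx0 mul0mx.
- exists j; apply: (row_free_inj freeN).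
  by rewrite mul_conjmx_expr // Yj0 mulmx0 mul0mx.
Qed.

Lemma mxrank_conjmx_adds X Y : stablemx N X -> stablemx N Y ->
  (X <= N *m X)%MS -> (Y <= N *m Y)%MS ->
  \rank (conjmx N X + conjmx N Y)%MS = \rank (X + Y)%MS.
Proof.
move=> sNX sNY sXNX sYNY.
rewrite -(mxrankMfree _ freeN) addsmxMr !mul_conjmx //.
apply: eqmx_rank; apply/andP; split; rewrite addsmx_sub.
  by rewrite (submx_trans (submxMl N X) (addsmxSl X Y))
             (submx_trans (submxMl N Y) (addsmxSr X Y)).
by rewrite (submx_trans sXNX (addsmxSl _ _)) (submx_trans sYNY (addsmxSr _ _)).
Qed.

End Conjugation.

Section Socle.
Variables (k : fieldType) (n : nat) (X Y : 'M[k]_n).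

Definition soclemx : 'M_n := (kermx X :&: kermx Y)%MS.

Lemma sub_soclemx m (V : 'M_(m, n)) :
  (V <= soclemx)%MS = (V *m X == 0) && (V *m Y == 0).
Proof. by rewrite sub_capmx !sub_kermx. Qed.

Lemma soclemx_mul0 : soclemx *m X = 0 /\ soclemx *m Y = 0.
Proof.
by move: (submx_refl soclemx); rewrite sub_soclemx => /andP[/eqP-> /eqP->].
Qed.

Lemma mxrank_soclemx_compl : (\rank soclemx^C <= \rank X + \rank Y)%N.
Proof.
have := mxrank_sum_cap (kermx X) (kermx Y); rewrite mxrank_compl !mxrank_ker.
have := rank_leq_col (kermx X + kermx Y)%MS; have := rank_leq_col X.
have := rank_leq_col Y; rewrite /soclemx; lia.
Qed.

Lemma exists_stable_supplement r :
    (\rank (X + Y)%MS + (\rank X + \rank Y) <= r)%N -> (r <= n)%N ->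
  exists2 N : 'M_(r, n), row_free N &
    [/\ (X <= N)%MS, (Y <= N)%MS & row_full (N + soclemx)%MS].
Proof.
move=> rankr rn; set U := (X + Y + soclemx^C)%MS.
have rankU : (\rank U <= r)%N.
  apply: leq_trans (mxrank_adds_leqif _ _) _.
  by apply: leq_trans rankr; rewrite leq_add2l mxrank_soclemx_compl.
have [N freeN sUN] := exists_row_free_supmx rankU rn.
have sXYN : (X + Y <= N)%MS := submx_trans (addsmxSl _ _) sUN.
exists N => //; split.
- exact: submx_trans (addsmxSl X Y) sXYN.
- exact: submx_trans (addsmxSr X Y) sXYN.
rewrite -sub1mx (submx_trans _ (_ : soclemx^C + soclemx <= N + soclemx)%MS) //.
  by rewrite addsmxC sub1mx addsmx_compl_full.
by rewrite addsmxS // (submx_trans (addsmxSr _ _) sUN).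
Qed.

End Socle.

Lemma similar_block0_conjmx (k : fieldType) p r (X Y : 'M[k]_(p + r))
    (N : 'M_(r, p + r)) :
    row_free N -> (X <= N)%MS -> (Y <= N)%MS -> row_full (N + soclemx X Y)%MS ->
  exists2 P, P \in unitmx &
    invmx P *m X *m P = block_mx 0 0 0 (conjmx N X) /\
    invmx P *m Y *m P = block_mx 0 0 0 (conjmx N Y).
Proof.
move=> freeN sXN sYN fullN.
have [K sKS unitQ] := exists_unit_col_mx_sub freeN fullN.
have [KX0 KY0] : K *m X = 0 /\ K *m Y = 0.
  by move: sKS; rewrite sub_soclemx => /andP[/eqP-> /eqP->].
have sNX : stablemx N X := submx_trans (submxMl N X) sXN.
have sNY : stablemx N Y := submx_trans (submxMl N Y) sYN.
exists (invmx (col_mx K N)); first by rewrite unitmx_inv.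
by rewrite invmxK (conj_col_mx_block0 KX0 sNX) (conj_col_mx_block0 KY0 sNY) !mulmxK.
Qed.

Theorem proposition2p3 (k : closedFieldType) (hk : [pchar k] =i pred0)
    (n : nat) (h3 : (3 <= n)%N) (X Y : 'M[k]_n) :
  fin_mod_at_m X Y -> min_gens X Y = n.-1 ->
  exists (P : 'M[k]_n) (X' Y' : 'M[k]_3),
    [/\ P \in unitmx,
        fin_mod_at_m X' Y',
        min_gens X' Y' = 2%N,
        invmx P *m X *m P = castmx (subnK h3, subnK h3) (block_mx 0 0 0 X') &
        invmx P *m Y *m P = castmx (subnK h3, subnK h3) (block_mx 0 0 0 Y')].
Proof.
move=> modXY gensXY.
have rankXY : \rank (X + Y)%MS = 1%N.
  by move: gensXY (rank_leq_col (X + Y)%MS); rewrite /min_gens; lia.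
have rank3 : (\rank (X + Y)%MS + (\rank X + \rank Y) <= 3)%N.
  by have := mxrankS (addsmxSl X Y); have := mxrankS (addsmxSr X Y); lia.
move: (n - 3)%N (subnK h3) => p e; clear h3 gensXY.
case: n / e X Y modXY rankXY rank3 => X Y modXY rankXY rank3.
have [N freeN [sXN sYN fullN]] := exists_stable_supplement rank3 (leq_addl p 3).
have [P unitP [PX PY]] := similar_block0_conjmx freeN sXN sYN fullN.
have sNX : stablemx N X := submx_trans (submxMl N X) sXN.
have sNY : stablemx N Y := submx_trans (submxMl N Y) sYN.
have [SX0 SY0] := soclemx_mul0 X Y.
exists P, (conjmx N X), (conjmx N Y); rewrite !castmx_id; split => //.
- exact: fin_mod_at_m_conjmx.
- by rewrite /min_gens mxrank_conjmx_adds ?rankXY // (submx_mul_row_full_adds fullN).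
Qed.
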